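(* Let $\beta\ge 2$ and $t\ge 0$ be integers, and let $G$ be a cactus with $2\beta$ vertices, exactly $t$ cycles, a perfect matching, and minimum degree $\delta(G)\ge 2$. Then $$SO(G)<\Phi(\beta,t)=(\beta+t-1)\sqrt{(\beta+t)^{2}+4}+\sqrt{(\beta+t)^{2}+1}+\sqrt{5}\,(\beta-t-1)+2\sqrt{2}\,t.$$
   Context: All graphs are finite, simple and connected. For a graph $G$, $d_u$ denotes the degree of vertex $u$, $\delta(G)$ the minimum degree, and the Sombor index is $SO(G)=\sum_{uv\in E(G)}\sqrt{d_u^2+d_v^2}$. A cactus is a connected graph in which any two cycles have at most one common vertex. *)

From HB Require Import structures.
From mathcomp Require Import all_boot all_order all_algebra.
From mathcomp Require Import reals.
Set Implicit Arguments. Unset Strict Implicit. Unset Printing Implicit Defensive.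
Import Order.TTheory GRing.Theory Num.Theory.

Definition simple_graph (T : finType) (e : rel T) : Prop :=
  symmetric e /\ irreflexive e.

Definition graph_connected (T : finType) (e : rel T) : Prop :=
  forall x y : T, connect e x y.

Definition edges (T : finType) (e : rel T) : {set {set T}} :=
  [set A : {set T} | [exists u, exists v, e u v && (A == [set u; v])]].

Definition deg (T : finType) (e : rel T) (u : T) : nat := #|[set v | e u v]|.

Definition min_deg_ge (T : finType) (e : rel T) (k : nat) : Prop :=
  forall u : T, k <= deg e u.

Definition cverts (T : finType) (F : {set {set T}}) : {set T} :=
  \bigcup_(f in F) f.
Definition frel (T : finType) (F : {set {set T}}) : rel T :=
  fun x y => [set x; y] \in F.

Definition is_cycle (T : finType) (e : rel T) (F : {set {set T}}) : bool :=
  [&& F != set0, F \subset edges e,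
      [forall v, (v \in cverts F) ==> (#|[set f in F | v \in f]| == 2)]
    & [forall x, forall y,
         ((x \in cverts F) && (y \in cverts F)) ==> connect (frel F) x y]].

Definition cycles (T : finType) (e : rel T) : {set {set {set T}}} :=
  [set F | is_cycle e F].

Definition num_cycles (T : finType) (e : rel T) : nat := #|cycles e|.

Definition cactus (T : finType) (e : rel T) : Prop :=
  graph_connected e /\
  forall F1 F2, is_cycle e F1 -> is_cycle e F2 -> F1 != F2 ->
    #|cverts F1 :&: cverts F2| <= 1.

Definition has_perfect_matching (T : finType) (e : rel T) : Prop :=
  exists M : {set {set T}}, M \subset edges e /\
    forall v : T, #|[set f in M | v \in f]| = 1.

Local Open Scope ring_scope.

(* Sombor index: sum over edges uv of sqrt(d_u^2+d_v^2); each unordered edge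
   is counted twice in the sum over ordered adjacent pairs, hence the 1/2. *)
Definition sombor (R : realType) (T : finType) (e : rel T) : R :=
  2^-1 * \sum_(u : T) \sum_(v : T | e u v)
     Num.sqrt ((deg e u)%:R ^+ 2 + (deg e v)%:R ^+ 2).

Definition Phi (R : realType) (beta t : nat) : R :=
  ((beta + t)%:R - 1) * Num.sqrt ((beta + t)%:R ^+ 2 + 4)
  + Num.sqrt ((beta + t)%:R ^+ 2 + 1)
  + Num.sqrt 5 * (beta%:R - t%:R - 1)
  + 2 * Num.sqrt 2 * t%:R.

From HB Require Import structures.
From mathcomp Require Import all_boot all_order all_algebra.
From mathcomp Require Import reals.
From mathcomp Require Import ring lra zify.
Import Order.TTheory GRing.Theory Num.Theory.
Set Implicit Arguments. Unset Strict Implicit. Unset Printing Implicit Defensive.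

(* 1. Combinatorics.  A BFS spanning tree has <= n - 1 edges, and every
      non-tree edge lies on a cycle made of it and tree edges only (its
      fundamental cycle), distinct for distinct non-tree edges; so
      |E| <= t + n - 1 and, by the handshake lemma, sum d <= 2t + 2n - 2.
      Each degree is <= n - 1 and, as all other degrees are >= 2, also
      <= sum d + 2 - 2n.
   2. Analysis.  For degrees a, b >= 2, sqrt(a^2 + b^2) <= a + b - 4 + 2 sqrt 2,
      hence SO(G) <= sum d^2 - (2 - sqrt 2) sum d.  The degree bounds of
      step 1 bound sum d^2, and an explicit polynomial estimate (two
      regimes, cleared of square roots by rational enclosures) shows that
      the result is below Phi(b, t), which is nondecreasing in t. *)

Section CyclicSequences.
Variable T : finType.

Lemma next_next_neq (c : seq T) w : uniq c -> 2 < size c -> w \in c ->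
  next c w != w /\ next c (next c w) != w.
Proof.
move=> Uc Sc wc; have [i q Hq] := rot_to wc.
have Ur : uniq (rot i c) by rewrite rot_uniq.
have Sr : 2 < size (rot i c) by rewrite size_rot.
rewrite -!(next_rot i Uc) Hq; rewrite Hq in Ur Sr.
case: q {Hq} Ur Sr => [|a [|b q]] //= Ur _.
move: Ur; rewrite !inE !negb_or => /andP[/and3P[wa wb _] /andP[/andP[ab _] _]].
by rewrite /= eqxx (eq_sym a w) (negbTE wa) eqxx eq_sym.
Qed.

Definition seq_edges (c : seq T) : {set {set T}} := [set [set x; next c x] | x in c].

Lemma cverts_seq_edges (c : seq T) v : (v \in cverts (seq_edges c)) = (v \in c).
Proof.
apply/bigcupP/idP => [[f /imsetP[x xc ->]]|vc].
  by rewrite !inE => /orP[/eqP->|/eqP->]; rewrite ?mem_next.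
by exists [set v; next c v]; [apply/imsetP; exists v | rewrite !inE eqxx].
Qed.

Lemma seq_edges_at (c : seq T) w : uniq c -> 2 < size c -> w \in c ->
  #|[set f in seq_edges c | w \in f]| = 2.
Proof.
move=> Uc Sc wc; have [n1 n2] := next_next_neq Uc Sc wc.
have -> : [set f in seq_edges c | w \in f] = [set [set w; next c w]; [set prev c w; w]].
  apply/setP => f; rewrite !inE; apply/andP/orP.
  - case=> /imsetP[x xc ->]; rewrite !inE => /orP[/eqP->|/eqP wn]; first by left.
    by right; rewrite wn prev_next.
  - case=> /eqP->; split; rewrite ?inE ?eqxx ?orbT //; apply/imsetP.
      by exists w.
    by exists (prev c w); rewrite ?mem_prev // next_prev.
rewrite cards2; case: eqP => // E.
have : next c w \in [set prev c w; w] by rewrite -E !inE eqxx orbT.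
rewrite !inE (negbTE n1) orbF => /eqP Hp.
by move: n2; rewrite Hp (next_prev Uc) eqxx.
Qed.

Lemma seq_edges_is_cycle (e : rel T) (c : seq T) : uniq c -> 2 < size c ->
  (forall x, x \in c -> [set x; next c x] \in edges e) ->
  is_cycle e (seq_edges c).
Proof.
move=> Uc Sc He; apply/and4P; split.
- case: c Uc Sc He => // x c _ _ _; apply/set0Pn.
  by exists [set x; next (x :: c) x]; apply/imsetP; exists x; rewrite ?mem_head.
- by apply/subsetP => f /imsetP[x xc ->]; apply: He.
- apply/forallP => w; apply/implyP; rewrite cverts_seq_edges => wc.
  by rewrite seq_edges_at.
- apply/forallP => x; apply/forallP => y; apply/implyP.
  rewrite !cverts_seq_edges => /andP[xc yc].
  have : fconnect (next c) x y by rewrite (fconnect_cycle (cycle_next Uc) xc).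
  move/iter_findex; move: (findex _ x y) => k <-.
  elim: k => [|k IH]; first exact: connect0.
  apply: connect_trans IH _; rewrite iterS; apply: connect1; apply/imsetP.
  by exists (iter k (next c) x) => //; elim: k => //= k IH; rewrite mem_next.
Qed.

End CyclicSequences.

Section Edges.
Variable T : finType.

Lemma mem_edges (e : rel T) u v : e u v -> [set u; v] \in edges e.
Proof. by move=> h; rewrite inE; apply/existsP; exists u; apply/existsP; exists v; rewrite h eqxx. Qed.

Lemma edges_subset (e1 e2 : rel T) : subrel e1 e2 -> edges e1 \subset edges e2.
Proof.
move=> H; apply/subsetP => f; rewrite !inE => /existsP[u /existsP[v /andP[h1 h2]]].
by apply/existsP; exists u; apply/existsP; exists v; rewrite H.
Qed.

End Edges.

Section SpanningTree.
Variables (T : finType) (e : rel T) (r : T).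
Hypotheses (sym_e : symmetric e) (irr_e : irreflexive e)
  (con_e : graph_connected e).

Definition reachable_in x k := [exists p : k.-tuple T, path e r p && (last r p == x)].

Lemma reachable_in_ex x : exists k, reachable_in x k.
Proof.
have /connectP[p ep ->] := con_e r x.
by exists (size p); apply/existsP; exists (in_tuple p); rewrite /= ep eqxx.
Qed.

Definition dist x := ex_minn (reachable_in_ex x).

(* Every vertex other than the root has a neighbour strictly closer to r:
   the second-to-last vertex of a shortest walk. *)
Lemma closer_neighbour x : x != r -> exists y, e y x && (dist y < dist x).
Proof.
move=> xr; rewrite /dist; case: ex_minnP => k /existsP[p /andP[ep /eqP lp]] _.
case: p ep lp => s /= /eqP <-; case/lastP: s => [|s y] /=.
  by move=> _ lx; rewrite lx eqxx in xr.
rewrite rcons_path last_rcons size_rcons => /andP[es ey] <-.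
exists (last r s); rewrite ey /=.
case: ex_minnP => k' _ /(_ (size s)) H; apply: leq_ltn_trans (H _) _ => //.
by apply/existsP; exists (in_tuple s); rewrite /= es eqxx.
Qed.

(* The BFS parent of a vertex (the root is its own parent). *)
Definition parent x :=
  if [pick y | e y x && (dist y < dist x)] is Some y then y else r.

Lemma parentP x : x != r -> e (parent x) x && (dist (parent x) < dist x).
Proof.
move=> xr; rewrite /parent; case: pickP => [y //|H].
by have [y Hy] := closer_neighbour xr; rewrite H in Hy.
Qed.

Definition tree_rel : rel T :=
  fun u v => ((u != r) && (v == parent u)) || ((v != r) && (u == parent v)).

Lemma tree_rel_sym : symmetric tree_rel.
Proof. by move=> u v; rewrite /tree_rel orbC. Qed.

Lemma tree_rel_sub : subrel tree_rel e.
Proof.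
by move=> u v /orP[] /andP[nr /eqP ->]; case/andP: (parentP nr); rewrite // sym_e.
Qed.

Lemma tree_connect_root x : connect tree_rel x r.
Proof.
elim: {x}(dist x).+1 {-2}x (ltnSn (dist x)) => // n IH x Hx.
have [->|xr] := eqVneq x r; first exact: connect0.
have /andP[_ Hd] := parentP xr.
apply: (connect_trans (y := parent x)).
  by apply: connect1; rewrite /tree_rel xr eqxx.
exact/IH/(leq_trans Hd).
Qed.

Lemma tree_connect u v : connect tree_rel u v.
Proof.
apply: connect_trans (tree_connect_root u) _.
by rewrite (sym_connect_sym tree_rel_sym); apply: tree_connect_root.
Qed.

(* The tree has at most n - 1 edges: every edge is {x, parent x} for some
   non-root x. *)
Lemma card_tree_edges : #|edges tree_rel| <= #|T|.-1.
Proof.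
rewrite -(cardsC1 r); apply: leq_trans (leq_imset_card (fun x => [set x; parent x]) _).
apply: subset_leq_card; apply/subsetP => f.
rewrite inE => /existsP[u /existsP[v /andP[Tuv /eqP ->]]].
case/orP: Tuv => /andP[nr /eqP ->]; apply/imsetP; first by exists u; rewrite ?inE.
by exists v; rewrite ?inE // setUC.
Qed.

(* Every edge f of e outside the tree closes a cycle of e using f and tree
   edges only: the tree path between the endpoints of f, closed by f. *)
Lemma fundamental_cycle_ex f : f \in edges e :\: edges tree_rel ->
  exists F, [&& F \in cycles e, f \in F & F \subset f |: edges tree_rel].
Proof.
rewrite inE => /andP[fT fe]; move: (fe); rewrite inE => /existsP[u /existsP[v /andP[euv /eqP fE]]].
have nT : ~~ tree_rel u v by apply: contra fT => h; rewrite fE mem_edges.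
have uv : u != v by apply: contraTneq euv => ->; rewrite irr_e.
have /connectP[p pp lp] := tree_connect u v.
case: (shortenP pp) lp => p' pp' Up _ lp.
have Sc : 2 < size (u :: p').
  case: (p') pp' Up lp => [|a [|b q]] //=; first by move=> _ _ E; rewrite E eqxx in uv.
  by rewrite andbT => h _ E; rewrite E h in nT.
set c := u :: p'.
have cyc : cycle (fun x y => tree_rel x y || ([set x; y] == f)) c.
  rewrite /c /= rcons_path -lp; apply/andP; split.
    by apply: sub_path pp' => x y h; rewrite h.
  by rewrite fE lp setUC eqxx orbT.
have HE x : x \in c -> [set x; next c x] \in f |: edges tree_rel.
  move=> xc; case/orP: (next_cycle cyc xc) => [h|/eqP ->]; rewrite ?setU11 //.
  by rewrite setU1r // mem_edges.
exists (seq_edges c); apply/and3P; split.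
- rewrite inE; apply: seq_edges_is_cycle => // x xc.
  move: (HE x xc); rewrite in_setU1 => /orP[/eqP-> //|].
  exact: (subsetP (edges_subset tree_rel_sub)).
- apply/imsetP; exists v; first by rewrite lp mem_last.
  rewrite fE setUC; congr [set _; _].
  by rewrite lp next_nth mem_last /c index_last // nth_default.
- by apply/subsetP => g /imsetP[x xc ->]; apply: HE.
Qed.

Definition fundamental_cycle f :=
  odflt set0 [pick F | [&& F \in cycles e, f \in F & F \subset f |: edges tree_rel]].

Lemma fundamental_cycleP f : f \in edges e :\: edges tree_rel ->
  [&& fundamental_cycle f \in cycles e, f \in fundamental_cycle f
    & fundamental_cycle f \subset f |: edges tree_rel].
Proof.
move=> fN; rewrite /fundamental_cycle; case: pickP => [F //|H].
by have [F HF] := fundamental_cycle_ex fN; rewrite H in HF.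
Qed.

(* Distinct non-tree edges have distinct fundamental cycles (each contains
   only one non-tree edge), hence |E| <= (number of cycles) + n - 1. *)
Lemma card_edges_le : #|edges e| <= #|cycles e| + #|T|.-1.
Proof.
set N := edges e :\: edges tree_rel.
apply: leq_trans (_ : #|N :|: edges tree_rel| <= _).
  by apply/subset_leq_card/subsetP => f fe; rewrite in_setU in_setD fe andbT orNb.
apply: leq_trans (leq_card_setU _ _) (leq_add _ card_tree_edges).
rewrite -(card_in_imset (f := fundamental_cycle)).
  apply/subset_leq_card/subsetP => F /imsetP[f fN ->].
  by case/and3P: (fundamental_cycleP fN).
move=> f g fN gN E.
case/and3P: (fundamental_cycleP fN) => _ ff _.
case/and3P: (fundamental_cycleP gN) => _ _ /subsetP/(_ f).
rewrite -E in_setU1 => /(_ ff) /orP[/eqP //|fT].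
by move: fN; rewrite in_setD fT.
Qed.

End SpanningTree.

Section Degrees.
Variables (T : finType) (e : rel T).
Hypotheses (sym_e : symmetric e) (irr_e : irreflexive e).

Lemma card_edge f : f \in edges e -> #|f| = 2.
Proof.
rewrite inE => /existsP[u /existsP[v /andP[euv /eqP ->]]].
by rewrite cards2; case: eqP euv => [->|]; rewrite ?irr_e.
Qed.

(* The neighbours v of u correspond bijectively to the edges {u, v} at u. *)
Lemma deg_edges u : deg e u = #|[set f in edges e | u \in f]|.
Proof.
have inj : {in [set v | e u v] &, injective (fun v => [set u; v])}.
  move=> v w; rewrite !inE => euv euw E.
  have : w \in [set u; v] by rewrite E !inE eqxx orbT.
  by rewrite !inE => /orP[/eqP wu|/eqP //]; rewrite -wu irr_e in euw.
rewrite /deg -(card_in_imset inj); apply: eq_card => f; rewrite [RHS]inE.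
apply/imsetP/andP => [[v euv ->]|[fe uf]].
  by split; [apply: mem_edges; rewrite inE in euv | rewrite !inE eqxx].
move: (fe); rewrite inE => /existsP[x /existsP[y /andP[exy /eqP fE]]].
move: uf; rewrite fE !inE => /orP[] /eqP ->; first by exists y; rewrite ?inE.
by exists x; rewrite ?inE 1?sym_e // setUC.
Qed.

Lemma handshake : \sum_u deg e u = 2 * #|edges e|.
Proof.
under eq_bigr => u _ do rewrite deg_edges -sum1_card.
rewrite (exchange_big_dep (mem (edges e))) /=; last by move=> u f _; rewrite inE => /andP[].
rewrite mulnC -sum_nat_const; apply: eq_bigr => f fe.
rewrite -(card_edge fe) -sum1_card; apply: eq_bigl => u.
by rewrite [_ \in [set _ | _]]inE fe.
Qed.

Lemma deg_le_pred_card u : deg e u <= #|T|.-1.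
Proof.
rewrite /deg -(cardsC1 u); apply: subset_leq_card; apply/subsetP => v.
by rewrite !inE; apply: contraTneq => ->; rewrite irr_e.
Qed.

Lemma sum_deg_le_cycles : graph_connected e -> 0 < #|T| ->
  \sum_u deg e u + 2 <= 2 * num_cycles e + 2 * #|T|.
Proof.
move=> con n0; have [r _] := card_gt0P n0.
have := card_edges_le r sym_e irr_e con; rewrite /num_cycles; move: n0.
have := handshake; lia.
Qed.

Lemma deg_le_sum_deg (k : nat) u : min_deg_ge e k ->
  deg e u + k * #|T|.-1 <= \sum_v deg e v.
Proof.
move=> md; rewrite (bigD1 u) //= leq_add2l.
have : \sum_(v | v != u) k <= \sum_(v | v != u) deg e v.
  by apply: leq_sum => v _; apply: md.
by rewrite sum_nat_const cardC1 mulnC.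
Qed.

End Degrees.

Local Open Scope ring_scope.

Section RealEstimates.
Variable R : rcfType.

Lemma sqrtr_le_of_sqr (a x : R) : 0 <= a -> x <= a ^+ 2 -> Num.sqrt x <= a.
Proof. by move=> ha hx; rewrite -(ger0_norm ha) -sqrtr_sqr ler_wsqrtr. Qed.

Lemma le_sqrtr_of_sqr (a x : R) : 0 <= a -> a ^+ 2 <= x -> a <= Num.sqrt x.
Proof. by move=> ha hx; rewrite -(ger0_norm ha) -sqrtr_sqr ler_wsqrtr. Qed.

(* Rational enclosures of sqrt 2 and sqrt 5, just tight enough for the
   final estimate. *)
Lemma sqrt2_bounds : 7/5 <= Num.sqrt (2 : R) <= 17/12.
Proof. by apply/andP; split; [apply: le_sqrtr_of_sqr | apply: sqrtr_le_of_sqr]; lra. Qed.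

Lemma sqrt5_bounds : 11/5 <= Num.sqrt (5 : R) <= 9/4.
Proof. by apply/andP; split; [apply: le_sqrtr_of_sqr | apply: sqrtr_le_of_sqr]; lra. Qed.

(* The contribution of one edge: for degrees a, b >= 2, the Sombor term is at
   most a + b minus its deficit 4 - 2 sqrt 2 at a = b = 2. *)
Lemma sombor_term_le (a b : R) : 2 <= a -> 2 <= b ->
  Num.sqrt (a ^+ 2 + b ^+ 2) <= a + b - (4 - 2 * Num.sqrt 2).
Proof.
move=> ha hb; have /andP[y1 y2] := sqrt2_bounds.
have yy : Num.sqrt 2 ^+ 2 = 2 :> R by rewrite sqr_sqrtr // ler0n.
move: (Num.sqrt 2) y1 y2 yy => y y1 y2 yy.
have h1 : 0 <= (a - 2) * (b - 2) by rewrite mulr_ge0 // subr_ge0.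
have h2 : 0 <= (y - 1) * (a + b - 4) by apply: mulr_ge0; lra.
apply: sqrtr_le_of_sqr; lra.
Qed.

(* If every d u lies in [a, c], then sum d^2 <= (a + c) sum d - a c n,
   since (d u - a) (c - d u) >= 0. *)
Lemma sum_sqr_le_interval (T : finType) (d : T -> R) (a c : R) :
  (forall u, a <= d u <= c) ->
  \sum_u d u ^+ 2 <= (a + c) * \sum_u d u - a * c * #|T|%:R.
Proof.
move=> H; apply: le_trans (_ : \sum_u ((a + c) * d u - a * c) <= _).
  apply: ler_sum => u _; have /andP[h1 h2] := H u.
  have : 0 <= (d u - a) * (c - d u) by apply: mulr_ge0; lra.
  lra.
by rewrite sumrB -mulr_sumr sumr_const mulr_natr.
Qed.

Definition PhiR (b t : R) : R :=
  (b + t - 1) * Num.sqrt ((b + t) ^+ 2 + 4) + Num.sqrt ((b + t) ^+ 2 + 1)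
  + Num.sqrt 5 * (b - t - 1) + 2 * Num.sqrt 2 * t.

(* PhiR is nondecreasing in t, because 2 sqrt 2 > sqrt 5. *)
Lemma PhiR_mono (b t1 t2 : R) : 2 <= b -> 0 <= t1 -> t1 <= t2 ->
  PhiR b t1 <= PhiR b t2.
Proof.
move=> hb h1 h12; have /andP[r2 _] := sqrt2_bounds; have /andP[_ r5] := sqrt5_bounds.
have hsq : (b + t1) ^+ 2 <= (b + t2) ^+ 2 by rewrite ler_sqr ?nnegrE; lra.
have e1 : (b + t1 - 1) * Num.sqrt ((b + t1) ^+ 2 + 4)
          <= (b + t2 - 1) * Num.sqrt ((b + t2) ^+ 2 + 4).
  by apply: ler_pM; rewrite ?sqrtr_ge0 ?ler_wsqrtr ?lerD2r //; lra.
have e2 : Num.sqrt ((b + t1) ^+ 2 + 1) <= Num.sqrt ((b + t2) ^+ 2 + 1).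
  by rewrite ler_wsqrtr ?lerD2r.
have e3 : 0 <= (2 * Num.sqrt 2 - Num.sqrt 5) * (t2 - t1) by apply: mulr_ge0; lra.
rewrite /PhiR; lra.
Qed.

(* Lower bound for the leading term of PhiR, with D = b + t, cleared of the
   denominator D + 1: sqrt (D^2 + 4) >= D + 2 / (D + 1). *)
Lemma leading_term_lower (D : R) : 1 <= D ->
  (D - 1) * D * (D + 1) + 2 * (D - 1) <= (D - 1) * Num.sqrt (D ^+ 2 + 4) * (D + 1).
Proof.
move=> hD.
have h : D * (D + 1) + 2 <= Num.sqrt (D ^+ 2 + 4) * (D + 1).
  have z0 : 0 <= Num.sqrt (D ^+ 2 + 4) by apply: sqrtr_ge0.
  have zz : Num.sqrt (D ^+ 2 + 4) ^+ 2 = D ^+ 2 + 4.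
    by rewrite sqr_sqrtr // addr_ge0 ?sqr_ge0.
  have DD : 0 <= D * (D + 1) by apply: mulr_ge0; lra.
  rewrite -ler_sqr ?nnegrE ?mulr_ge0 ?exprMn ?zz //; lra.
have hD1 : 0 <= D - 1 by rewrite subr_ge0.
have -> : (D - 1) * D * (D + 1) + 2 * (D - 1) = (D - 1) * (D * (D + 1) + 2) by ring.
by rewrite -mulrA ler_wpM2l.
Qed.

(* A polynomial minorant of PhiR b t * (D + 1), where t = s + 1 and
   D = b + t; it combines leading_term_lower, sqrt (D^2 + 1) >= D and the
   enclosures of sqrt 2 and sqrt 5. *)
Definition Phi_minorant (b s : R) : R :=
  ((b + s) * (b + s + 1) + (b + s + 1) + 11/5 * (b - 1) + 11/20 * (s + 1))
    * (b + s + 2) + 2 * (b + s).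

Lemma Phi_minorant_le (b s : R) : 2 <= b -> 0 <= s ->
  Phi_minorant b s <= PhiR b (s + 1) * (b + s + 2).
Proof.
move=> hb hs; have /andP[r2 _] := sqrt2_bounds; have /andP[r5 r5'] := sqrt5_bounds.
have hD : 1 <= b + (s + 1) by lra.
have hZ := leading_term_lower hD.
have hW : b + (s + 1) <= Num.sqrt ((b + (s + 1)) ^+ 2 + 1).
  by apply: le_sqrtr_of_sqr; lra.
have hY : 11/5 * (b - 1) + 11/20 * (s + 1)
          <= Num.sqrt 5 * (b - (s + 1) - 1) + 2 * Num.sqrt 2 * (s + 1).
  have h1 : 11/5 * (b - 1) <= Num.sqrt 5 * (b - 1) by apply: ler_wpM2r; lra.
  have h2 : 11/20 * (s + 1) <= (2 * Num.sqrt 2 - Num.sqrt 5) * (s + 1).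
    by apply: ler_wpM2r; lra.
  lra.
have hpos : 0 <= b + s + 2 by lra.
have hW' := ler_wpM2r hpos hW; have hY' := ler_wpM2r hpos hY.
rewrite /Phi_minorant /PhiR; move: hZ hW' hY'.
have -> : b + (s + 1) + 1 = b + s + 2 by ring.
move: (Num.sqrt ((b + (s + 1)) ^+ 2 + 4)) (Num.sqrt ((b + (s + 1)) ^+ 2 + 1))
  (Num.sqrt 5) (Num.sqrt 2) => z w y5 y2 hZ hW' hY'.
lra.
Qed.

(* The two regimes of the final estimate, according to which degree bound
   is stronger: s <= b - 3/2 (substitute b = p + s + 3/2; every coefficient
   is then positive) and s >= b - 3/2 (substitute b = p + 2, s = p + q + 1/2;
   a sum of squares). Here 7/12 <= 2 - sqrt 2. *)
Lemma estimate_small_s (b s : R) : 0 <= s -> s <= b - 3/2 ->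
  (2 * s * (2 * s + 4) + 8 * b - 7/12 * (4 * b + 2 * s)) * (b + s + 2)
  < Phi_minorant b s.
Proof.
move=> hs hb; have [p hp ->] : exists2 p : R, 0 <= p & b = p + s + 3/2.
  by exists (b - 3/2 - s); [lra | ring].
have h1 : 0 <= p * s by apply: mulr_ge0.
have h2 : 0 <= p * s ^+ 2 by rewrite mulr_ge0 ?sqr_ge0.
have h3 : 0 <= p ^+ 2 * s by rewrite mulr_ge0 ?sqr_ge0.
have h4 : 0 <= p ^+ 3 by apply: exprn_ge0.
have h5 : 0 <= p ^+ 2 by apply: sqr_ge0.
have h6 : 0 <= s ^+ 2 by apply: sqr_ge0.
rewrite /Phi_minorant; lra.
Qed.

Lemma estimate_large_s (b s : R) : 2 <= b -> b - 3/2 <= s ->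
  (2 * s * (2 * b + 1) + 8 * b - 7/12 * (4 * b + 2 * s)) * (b + s + 2)
  < Phi_minorant b s.
Proof.
move=> hb hs; have [p hp eb] : exists2 p : R, 0 <= p & b = p + 2.
  by exists (b - 2); [lra | ring].
have [q hq ->] : exists2 q : R, 0 <= q & s = p + q + 1/2.
  by exists (s - p - 1/2); [lra | ring].
rewrite eb.
have h1 : 0 <= (q - 2/3) ^+ 2 by apply: sqr_ge0.
have h2 : 0 <= p * (q - 3/5) ^+ 2 by rewrite mulr_ge0 ?sqr_ge0.
have h3 : 0 <= q ^+ 3 by apply: exprn_ge0.
have h4 : 0 <= p * q by apply: mulr_ge0.
have h5 : 0 <= p ^+ 2 by apply: sqr_ge0.
rewrite /Phi_minorant; lra.
Qed.

(* The final real estimate: with n = 2b vertices, sum of degrees 4b + 2s and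
   Q the sum of squared degrees, bounded by the two estimates of
   sum_sqr_le_interval, the Sombor upper bound is below PhiR b (s + 1). *)
Lemma sombor_bound_lt_PhiR (b s Q : R) : 2 <= b -> 0 <= s ->
  Q <= 2 * s * (2 * s + 4) + 8 * b -> Q <= 2 * s * (2 * b + 1) + 8 * b ->
  Q - (2 - Num.sqrt 2) * (4 * b + 2 * s) < PhiR b (s + 1).
Proof.
move=> hb hs hQ1 hQ2; have /andP[_ r2] := sqrt2_bounds.
have hc : 7/12 * (4 * b + 2 * s) <= (2 - Num.sqrt 2) * (4 * b + 2 * s).
  by apply: ler_wpM2r; lra.
have hpos : 0 < b + s + 2 by lra.
suff key : forall X, Q <= X ->
    (X - 7/12 * (4 * b + 2 * s)) * (b + s + 2) < Phi_minorant b s ->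
    Q - (2 - Num.sqrt 2) * (4 * b + 2 * s) < PhiR b (s + 1).
  have [small|large] := lerP s (b - 3/2).
    exact: key hQ1 (estimate_small_s hs small).
  exact: key hQ2 (estimate_large_s hb (ltW large)).
move=> X hX /lt_le_trans/(_ (Phi_minorant_le hb hs)); rewrite ltr_pM2r // => H.
lra.
Qed.

(* The whole estimate in terms of a degree sequence d on n = 2b vertices:
   all d u lie in [2, 2b - 1] and in [2, sum d + 2 - 4b] (the other vertices
   have degree >= 2), and sum d <= 2t + 4b - 2 (cycle count). *)
Lemma degree_sequence_bound (T : finType) (d : T -> R) (b t : R) :
  #|T|%:R = 2 * b -> 2 <= b -> (forall u, 2 <= d u) ->
  (forall u, d u + 1 <= 2 * b) -> (forall u, d u + 4 * b <= \sum_v d v + 2) ->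
  \sum_v d v + 2 <= 2 * t + 4 * b ->
  \sum_v d v ^+ 2 - (2 - Num.sqrt 2) * \sum_v d v < PhiR b t.
Proof.
move=> hn hb hd2 hdn hdS hSt.
have hS : 2 * #|T|%:R <= \sum_v d v.
  apply: le_trans (ler_sum _ (fun u _ => hd2 u)).
  by rewrite sumr_const mulr_natr.
have [s eS] : exists s, \sum_v d v = 4 * b + 2 * s.
  by exists ((\sum_v d v - 4 * b) / 2); field.
rewrite eS hn in hS hdS hSt *.
have hs : 0 <= s by lra.
have Q1 := sum_sqr_le_interval (d := d) (a := 2) (c := 2 * s + 2).
have Q2 := sum_sqr_le_interval (d := d) (a := 2) (c := 2 * b - 1).
rewrite eS hn in Q1 Q2.
apply: (lt_le_trans _ (PhiR_mono hb (_ : 0 <= s + 1) (_ : s + 1 <= t))); [|lra|lra].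
apply: sombor_bound_lt_PhiR => //.
- apply: le_trans (Q1 _) _; last lra.
  by move=> u; rewrite hd2 /=; have := hdS u; lra.
- apply: le_trans (Q2 _) _; last lra.
  by move=> u; rewrite hd2 /=; have := hdn u; lra.
Qed.

End RealEstimates.

Section SomborIndex.
Variables (R : realType) (T : finType) (e : rel T).
Hypotheses (sym_e : symmetric e) (mindeg : min_deg_ge e 2).

Let d u : R := (deg e u)%:R.

Lemma sum_over_nbrs_const u (K : R) : \sum_(v | e u v) K = K * d u.
Proof.
rewrite (eq_bigl (fun v => v \in [set v | e u v])); last by move=> v; rewrite inE.
by rewrite sumr_const mulr_natr.
Qed.

(* Summing the degree of every neighbour of every vertex counts each
   vertex v exactly d v times. *)
Lemma sum_nbrs_deg : \sum_u \sum_(v | e u v) d v = \sum_u d u ^+ 2.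
Proof.
rewrite (exchange_big_dep xpredT) //=; apply: eq_bigr => v _.
by rewrite (eq_bigl (e v)) => [|u]; rewrite ?sum_over_nbrs_const ?expr2 // sym_e.
Qed.

(* Linearising each term by sombor_term_le gives a bound depending only on
   the degree sequence. *)
Lemma sombor_le_degrees :
  sombor R e <= \sum_u d u ^+ 2 - (2 - Num.sqrt 2) * \sum_u d u.
Proof.
rewrite /sombor ler_pdivrMl ?ltr0n //.
apply: le_trans (_ : \sum_u \sum_(v | e u v) (d u + d v - (4 - 2 * Num.sqrt 2)) <= _).
  apply/ler_sum => u _; apply/ler_sum => v _.
  by apply: sombor_term_le; rewrite ler_nat; apply: mindeg.
under eq_bigr => u _ do rewrite !big_split /= !sum_over_nbrs_const.
rewrite !big_split /= sum_nbrs_deg -mulr_sumr.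
have -> : \sum_u d u * d u = \sum_u d u ^+ 2 by apply: eq_bigr => u _; rewrite expr2.
lra.
Qed.

End SomborIndex.

Unset Implicit Arguments.

Theorem lemma4p1 (R : realType) (beta t : nat) (T : finType) (e : rel T) :
  (2 <= beta)%N ->
  simple_graph e ->
  cactus e ->
  #|T| = (2 * beta)%N ->
  num_cycles e = t ->
  has_perfect_matching e ->
  min_deg_ge e 2 ->
  sombor R e < Phi R beta t.
Proof.
move=> hb [sym irr] [con _] hn ht _ md.
have n0 : (0 < #|T|)%N by rewrite hn; lia.
have hS := sum_deg_le_cycles sym irr con n0; rewrite ht in hS.
have hnR : #|T|%:R = 2 * beta%:R :> R by rewrite hn natrM.
apply: le_lt_trans (sombor_le_degrees R sym md) _.
have -> : Phi R beta t = PhiR beta%:R t%:R by rewrite /Phi /PhiR natrD.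
apply: degree_sequence_bound => // [|u|u|u|]; rewrite -?natr_sum.
- by rewrite ler_nat.
- by rewrite ler_nat; apply: md.
- have : (deg e u + 1 <= 2 * beta)%N by have := deg_le_pred_card irr u; lia.
  by rewrite -(ler_nat R) natrD natrM.
- have : (deg e u + 4 * beta <= \sum_v deg e v + 2)%N.
    by have := deg_le_sum_deg u md; lia.
  by rewrite -(ler_nat R) (natrD _ _ 2) (natrD _ (deg e u)) natrM.
- have : (\sum_v deg e v + 2 <= 2 * t + 4 * beta)%N by move: hS; rewrite hn; lia.
  by rewrite -(ler_nat R) (natrD _ _ 2) (natrD _ (2 * t)) !natrM.
Qed.
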